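(* Consider the homogeneous tightly-feasible interference channel $[(N,M)^K]$ (all RXs have $N$ antennas, all TXs have $M$ antennas, with $M+N=K+1$), and assume $M\neq 1$ and $M\neq K$. Then there is no pair $(\mathcal S_{\mathrm{RX}},\mathcal S_{\mathrm{TX}})$ of subsets of $\mathcal K$, other than $(\emptyset,\emptyset)$ and $(\mathcal K,\mathcal K)$, satisfying $\mathcal N_{\mathrm{Var}}(\mathcal S_{\mathrm{RX}},\mathcal S_{\mathrm{TX}})=\mathcal N_{\mathrm{Eq}}(\mathcal S_{\mathrm{RX}},\mathcal S_{\mathrm{TX}})$ (i.e. no strictly included generalized tightly-feasible sub-IC).
   Context: $\mathcal K=\{1,\dots,K\}$, $K\ge2$. For $\mathcal S_{\mathrm{RX}},\mathcal S_{\mathrm{TX}}\subseteq\mathcal K$, with $N_i=N$ and $M_i=M$ for all $i$: $\mathcal N_{\mathrm{Var}}(\mathcal S_{\mathrm{RX}},\mathcal S_{\mathrm{TX}})=\sum_{i\in\mathcal S_{\mathrm{RX}}}(N_i-1)+\sum_{i\in\mathcal S_{\mathrm{TX}}}(M_i-1)$ and $\mathcal N_{\mathrm{Eq}}(\mathcal S_{\mathrm{RX}},\mathcal S_{\mathrm{TX}})=\#\{(j,k): j\in\mathcal S_{\mathrm{RX}},k\in\mathcal S_{\mathrm{TX}},j\ne k\}$. A generalized sub-IC is the interference channel formed by a subset of RXs and a subset of TXs (not necessarily paired); it is tightly-feasible when $\mathcal N_{\mathrm{Var}}=\mathcal N_{\mathrm{Eq}}$ for its pair of sets. *)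

(* Users/indices 1..K are represented by 'I_K (values 0..K-1). *)
From mathcomp Require Import all_boot.
Set Implicit Arguments. Unset Strict Implicit. Unset Printing Implicit Defensive.

(* Homogeneous channel: N_i = N and M_i = M for every user i. *)
Definition NVar (K N M : nat) (SRX STX : {set 'I_K}) : nat :=
  \sum_(i in SRX) (N - 1) + \sum_(i in STX) (M - 1).

Definition NEq (K : nat) (SRX STX : {set 'I_K}) : nat :=
  #|[set p : 'I_K * 'I_K | (p.1 \in SRX) && (p.2 \in STX) && (p.1 != p.2)]|.

From mathcomp Require Import all_boot.
From mathcomp Require Import zify.

Set Implicit Arguments. Unset Strict Implicit. Unset Printing Implicit Defensive.

(* Write a = #|S_RX|, b = #|S_TX|, c = #|S_RX :&: S_TX|.  Counting
   gives N_Var = a (N-1) + b (M-1) and N_Eq = a b - c, so tightness reads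
     a (N-1) + b (M-1) + c = a b,  i.e.  (a - (M-1)) (b - (N-1)) = c + (M-1)(N-1).
   When M, N >= 2 the right-hand side is positive, so the two factors have the
   same sign.
   - If a < M, both factors are non-positive and bounded by M-1 and N-1 in
     absolute value; this forces c = 0 and a = b = 0: both sets are empty.
   - If a >= M, then b >= N.  Complementation (S_RX, S_TX) |-> (~S_TX, ~S_RX)
     preserves tightness whenever M + N = K + 1, and maps this case to the
     first one since #|~S_TX| = K - b < M; hence both complements are empty. *)

Definition tight (K N M : nat) (SRX STX : {set 'I_K}) : Prop :=
  NVar N M SRX STX = NEq SRX STX.

Lemma NVar_card (K N M : nat) (A B : {set 'I_K}) :
  NVar N M A B = #|A| * (N - 1) + #|B| * (M - 1).
Proof. by rewrite /NVar !sum_nat_const. Qed.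

(* The equations are the pairs of A x B off the diagonal; the diagonal part
   of A x B is in bijection with A :&: B. *)
Lemma NEq_card (K : nat) (A B : {set 'I_K}) :
  NEq A B + #|A :&: B| = #|A| * #|B|.
Proof.
pose diag := [set p : 'I_K * 'I_K | p.1 == p.2].
have offdiag : [set p : 'I_K * 'I_K | (p.1 \in A) && (p.2 \in B) && (p.1 != p.2)]
               = setX A B :\: diag.
  by apply/setP => p; rewrite !inE andbC.
have ondiag : setX A B :&: diag = (fun i => (i, i)) @: (A :&: B).
  apply/setP => [[i j]]; rewrite !inE /=; apply/idP/imsetP.
  - case/andP=> /andP[iA jB] /eqP eq_ij; subst j.
    by exists i; rewrite ?inE ?iA.
  - by case=> k; rewrite !inE => /andP[kA kB] [-> ->]; rewrite kA kB eqxx.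
have card_ondiag : #|setX A B :&: diag| = #|A :&: B|.
  by rewrite ondiag card_imset // => x y [].
by rewrite /NEq offdiag -card_ondiag addnC cardsID cardsX.
Qed.

Lemma tight_card (K N M : nat) (A B : {set 'I_K}) :
  tight N M A B <->
  #|A| * (N - 1) + #|B| * (M - 1) + #|A :&: B| = #|A| * #|B|.
Proof. by rewrite /tight NVar_card -(NEq_card A B); split=> [->|/addIn]. Qed.

Lemma card_set_ord_le (K : nat) (A : {set 'I_K}) : #|A| <= K.
Proof. by rewrite -[X in _ <= X]card_ord max_card. Qed.

Lemma card_setC_ord (K : nat) (A : {set 'I_K}) : #|~: A| = K - #|A|.
Proof. by rewrite cardsCs setCK card_ord. Qed.

Lemma tight_compl (K N M : nat) (A B : {set 'I_K}) :
  1 <= N -> 1 <= M -> M + N = K + 1 ->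
  tight N M A B -> tight N M (~: B) (~: A).
Proof.
move=> hN hM htight /tight_card hAB; apply/tight_card.
have hcap : #|~: B :&: ~: A| = K - #|A :|: B|.
  by rewrite -setCU card_setC_ord setUC.
have hcup := cardsUI A B.
have hA := card_set_ord_le A.
have hB := card_set_ord_le B.
have hU := card_set_ord_le (A :|: B).
rewrite hcap !card_setC_ord.
nia.
Qed.

Lemma tight_arith_small (N M a b c : nat) :
  2 <= N -> 2 <= M -> c <= a ->
  a * (N - 1) + b * (M - 1) + c = a * b -> a < M -> a = 0 /\ b = 0.
Proof.
move=> hN hM hca heq haM.
have hbN : b < N by nia.
have hprod : (M - 1 - a) * (N - 1 - b) = c + (M - 1) * (N - 1) by nia.
have hc : c = 0 by nia.
by split; nia.
Qed.

Lemma tight_arith_large (N M a b c : nat) :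
  2 <= N -> 2 <= M ->
  a * (N - 1) + b * (M - 1) + c = a * b -> M <= a -> N <= b.
Proof. by move=> hN hM heq haM; nia. Qed.

Lemma tight_small (K N M : nat) (A B : {set 'I_K}) :
  2 <= N -> 2 <= M -> tight N M A B -> #|A| < M -> A = set0 /\ B = set0.
Proof.
move=> hN hM /tight_card heq haM.
have hc : #|A :&: B| <= #|A| by rewrite subset_leq_card ?subsetIl.
have [hA hB] := tight_arith_small hN hM hc heq haM.
by split; apply/eqP; rewrite -cards_eq0; apply/eqP; [exact: hA | exact: hB].
Qed.

Lemma tight_large (K N M : nat) (A B : {set 'I_K}) :
  2 <= N -> 2 <= M -> M + N = K + 1 ->
  tight N M A B -> M <= #|A| -> #|~: B| < M.
Proof.
move=> hN hM htight /tight_card heq haM.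
have hbN := tight_arith_large hN hM heq haM.
by rewrite card_setC_ord; lia.
Qed.

Theorem corollary1 (K N M : nat) (hK : 2 <= K) (hN : 1 <= N) (hM : 1 <= M)
  (htight : M + N = K + 1) (hM1 : M <> 1) (hMK : M <> K)
  (SRX STX : {set 'I_K}) :
  NVar N M SRX STX = NEq SRX STX ->
  (SRX = set0 /\ STX = set0) \/ (SRX = setT /\ STX = setT).
Proof.
move=> hT.
have hM2 : 2 <= M by lia.
have hN2 : 2 <= N by lia.
have [haM | haM] := ltnP #|SRX| M.
  by left; exact: tight_small hN2 hM2 hT haM.
have hcomplT := tight_compl hN hM htight hT.
have [hB hA] := tight_small hN2 hM2 hcomplT (tight_large hN2 hM2 htight hT haM).
by right; split; [rewrite -[SRX]setCK hA | rewrite -[STX]setCK hB]; exact: setC0.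
Qed.
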